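(* Let $k\geq 3$, $A=\{0,1,\dots,k-1\}$, $n=k-1$, let $T\colon A^{n^2}\to A$ be defined by $T(x_{1,1},\dots,x_{1,n},\dots,x_{n,1},\dots,x_{n,n})=1$ if $x_{i,j}=i$ for all $i,j\in\{1,\dots,n\}$ or $x_{i,j}=j$ for all $i,j\in\{1,\dots,n\}$, and $0$ otherwise, and let $f\colon A^{n}\to A$ be given by $f(\mathbf{x})=1$ if $\mathbf{x}\in\{(1,2,\dots,n),(n,\dots,2,1)\}$ and $f(\mathbf{x})=0$ otherwise. Then $f\in\{T\}^{**}\setminus\langle\{T\}\rangle$.
   Context: $\mathrm{Op}(A)$ denotes the set of all finitary operations $A^m\to A$ with $m\geq1$. An $m$-ary $g$ commutes with an $n$-ary $h$ if for every matrix $(x_{ij})\in A^{m\times n}$, $g\bigl((h((x_{ij})_{j}))_{i}\bigr)=h\bigl((g((x_{ij})_{i}))_{j}\bigr)$. For $F\subseteq\mathrm{Op}(A)$, the centraliser $F^*$ is the set of all $g\in\mathrm{Op}(A)$ commuting with every member of $F$, and $F^{**}=(F^* )^*$ is the bicentraliser. $\langle F\rangle$ denotes the clone generated by $F$ (all term operations of positive arity of the algebra $(A;F)$, including projections). *)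

From mathcomp Require Import all_boot.
Set Implicit Arguments. Unset Strict Implicit. Unset Printing Implicit Defensive.

(* Membership in Op(A) additionally
   requires 0 < arity (imposed where Op(A) is quantified over). *)
Record op (A : Type) := Op { arity : nat; fn : ('I_arity -> A) -> A }.
Arguments arity {A} o.
Arguments fn {A} o _.

Definition commutes (A : Type) (g h : op A) : Prop :=
  forall x : 'I_(arity g) -> 'I_(arity h) -> A,
    fn g (fun i => fn h (fun j => x i j)) = fn h (fun j => fn g (fun i => x i j)).

Definition in_centraliser (A : Type) (F : op A -> Prop) (g : op A) : Prop :=
  0 < arity g /\ forall h, F h -> commutes g h.

Definition in_bicentraliser (A : Type) (F : op A -> Prop) (g : op A) : Prop :=
  in_centraliser (in_centraliser F) g.

Inductive term_op (A : Type) (F : op A -> Prop) (m : nat) : (('I_m -> A) -> A) -> Prop :=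
| term_proj (i : 'I_m) : term_op F (fun x => x i)
| term_comp (g : op A) (Fg : F g) (ts : 'I_(arity g) -> ('I_m -> A) -> A) :
    (forall j, term_op F (ts j)) ->
    term_op F (fun x => fn g (fun j => ts j x)).

Definition in_clone (A : Type) (F : op A -> Prop) (g : op A) : Prop :=
  0 < arity g /\ exists t, term_op F t /\ forall x, fn g x = t x.

Section Concrete.
Variables (k : nat) (hk : 2 < k).

Definition zeroA : 'I_k := Ordinal (ltn_trans (isT : 0 < 2) hk).
Definition oneA : 'I_k := Ordinal (ltn_trans (isT : 1 < 2) hk).

(* T : A^{n^2} -> A; the argument x_{i,j} (1 <= i,j <= n) sits at the
   0-based position p = (i-1)*n + (j-1), so i = p %/ n + 1, j = p %% n + 1. *)
Definition T_fn (x : 'I_((k.-1) * (k.-1)) -> 'I_k) : 'I_k :=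
  if [forall p, val (x p) == p %/ k.-1 + 1] || [forall p, val (x p) == p %% k.-1 + 1]
  then oneA else zeroA.

Definition T_op : op 'I_k := @Op 'I_k ((k.-1) * (k.-1)) T_fn.

Definition f_fn (x : 'I_(k.-1) -> 'I_k) : 'I_k :=
  if [forall i : 'I_(k.-1), val (x i) == i + 1] || [forall i : 'I_(k.-1), val (x i) == k.-1 - i]
  then oneA else zeroA.

Definition f_op : op 'I_k := @Op 'I_k (k.-1) f_fn.

End Concrete.

From mathcomp Require Import all_boot zify.
From Stdlib Require Import FunctionalExtensionality.
Set Implicit Arguments. Unset Strict Implicit. Unset Printing Implicit Defensive.

(* Testing T on the two patterns x_{ij} = i and x_{ij} = j, on which it takes
   the value 1, shows that an operation g commuting with T satisfies
   g(u or v) = g(u) or g(v) for 0-1 vectors u, v with disjoint supports.  Now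
   f(z) is the disjunction of the mutually exclusive tests z = (1,...,n) and
   z = (n,...,1), each of which is T applied to a minor of z; hence g commutes
   with f.  On the other hand T preserves the relation
   {(a, b) | a + b = k or a + b <= 1}, because every input on which T returns 1
   has first entry 1; so every term operation of T preserves it, while f sends
   the pairs (i, k - i) to (1, 1). *)

Section Preservation.
Variable A : Type.

Definition preserves (R : A -> A -> Prop) m (t : ('I_m -> A) -> A) : Prop :=
  forall x y, (forall i, R (x i) (y i)) -> R (t x) (t y).

Lemma term_op_preserves (F : op A -> Prop) R m (t : ('I_m -> A) -> A) :
  (forall h, F h -> preserves R (fn h)) -> term_op F t -> preserves R t.
Proof.
move=> FR; elim=> [i | g Fg ts _ IH] x y xy //=.
by apply: FR => // j; apply: IH.
Qed.

Lemma in_clone_preserves (F : op A -> Prop) R g :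
  (forall h, F h -> preserves R (fn h)) -> in_clone F g -> preserves R (fn g).
Proof.
move=> FR [_ [t [Ft gt]]] x y xy; rewrite !gt.
exact: term_op_preserves FR Ft x y xy.
Qed.

End Preservation.

Section Corollary.
Variables (n : nat) (hk : 2 < n.+1).
Local Notation A := 'I_n.+1.
Local Notation T := (T_fn hk).
Local Notation f := (f_fn hk).
Local Notation one := (oneA hk).
Local Notation zero := (zeroA hk).

Definition ind (b : bool) : A := if b then one else zero.

Lemma ind_eq_one b : (ind b == one) = b.
Proof. by case: b. Qed.

Lemma n_gt1 : 1 < n. Proof. exact: hk. Qed.
Lemma n_gt0 : 0 < n. Proof. exact: ltnW n_gt1. Qed.

Definition i0 : 'I_n := Ordinal n_gt0.
Definition i1 : 'I_n := Ordinal n_gt1.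

Lemma pos_subproof (i j : 'I_n) : i * n + j < n * n.
Proof. have := ltn_ord i; have := ltn_ord j; nia. Qed.

Definition pos (i j : 'I_n) : 'I_(n * n) := Ordinal (pos_subproof i j).

Lemma row_of_subproof (p : 'I_(n * n)) : p %/ n < n.
Proof. by rewrite ltn_divLR ?n_gt0. Qed.

Definition row_of (p : 'I_(n * n)) : 'I_n := Ordinal (row_of_subproof p).
Definition col_of (p : 'I_(n * n)) : 'I_n := Ordinal (ltn_pmod p n_gt0).

Lemma row_of_pos i j : row_of (pos i j) = i.
Proof. by apply: val_inj; rewrite /= divnMDl ?n_gt0 // divn_small ?addn0. Qed.

Lemma col_of_pos i j : col_of (pos i j) = j.
Proof. by apply: val_inj; rewrite /= modnMDl modn_small. Qed.

Lemma forall_row_of (P : pred 'I_n) : [forall p, P (row_of p)] = [forall i, P i].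
Proof.
apply/forallP/forallP => [H i | H p //].
by have := H (pos i i0); rewrite row_of_pos.
Qed.

Lemma forall_col_of (P : pred 'I_n) : [forall p, P (col_of p)] = [forall j, P j].
Proof.
apply/forallP/forallP => [H j | H p //].
by have := H (pos i0 j); rewrite col_of_pos.
Qed.

Definition idv (i : 'I_n) : A := inord i.+1.
Definition revv (i : 'I_n) : A := idv (rev_ord i).

Lemma val_idv i : val (idv i) = i.+1.
Proof. by rewrite /= inordK // ltnS. Qed.

Lemma val_revv i : val (revv i) = n - i.
Proof. by rewrite val_idv /= subnSK. Qed.

Lemma idv_inj : injective idv.
Proof. by move=> i j /(congr1 val); rewrite !val_idv => /succn_inj/val_inj. Qed.

Lemma idv_i0 : idv i0 = one.
Proof. by apply: val_inj; rewrite val_idv. Qed.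

Lemma val_eq_inord (a : A) v : v <= n -> (val a == v) = (a == inord v).
Proof. by move=> vn; apply/eqP/eqP => [<- | ->]; rewrite ?inord_val //= inordK. Qed.

Definition is_id (z : 'I_n -> A) : bool := [forall i, z i == idv i].
Definition is_rev (z : 'I_n -> A) : bool := [forall i, z i == revv i].

Lemma f_fnE z : f z = ind (is_id z || is_rev z).
Proof.
rewrite /f_fn /ind /is_id /is_rev; congr (if _ || _ then _ else _).
- by apply: eq_forallb => i; rewrite val_eq_inord addn1.
- by apply: eq_forallb => i; rewrite val_eq_inord ?leq_subr //; congr (_ == _);
    apply: val_inj; rewrite val_revv /= inordK // ltnS leq_subr.
Qed.

Lemma T_fnE (x : 'I_(n * n) -> A) :
  T x = ind ([forall p, x p == idv (row_of p)] || [forall p, x p == idv (col_of p)]).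
Proof.
rewrite /T_fn /ind; congr (if _ || _ then _ else _); apply: eq_forallb => p.
- by rewrite val_eq_inord addn1 // row_of_subproof.
- by rewrite val_eq_inord addn1 // ltn_pmod ?n_gt0.
Qed.

Lemma T_row z : T (fun p => z (row_of p)) = ind (is_id z).
Proof.
rewrite T_fnE (forall_row_of (fun i => z i == idv i)) orbC; congr ind.
case: eqfunP => // H; move: (H (pos i0 i0)) (H (pos i0 i1)).
by rewrite !row_of_pos !col_of_pos => -> /idv_inj.
Qed.

Lemma T_col z : T (fun p => z (col_of p)) = ind (is_id z).
Proof.
rewrite T_fnE (forall_col_of (fun j => z j == idv j)); congr ind.
case: eqfunP => // H; move: (H (pos i0 i0)) (H (pos i1 i0)).
by rewrite !row_of_pos !col_of_pos => -> /idv_inj.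
Qed.

Lemma is_id_rev z : is_id (fun i => z (rev_ord i)) = is_rev z.
Proof.
apply/eqfunP/eqfunP => H i; last by rewrite H /revv rev_ordK.
by rewrite -{1}(rev_ordK i) H.
Qed.

Lemma is_id_rev_disj z : is_id z -> ~~ is_rev z.
Proof.
move=> /eqfunP/(_ i0) z0; apply/negP => /eqfunP/(_ i0).
rewrite z0 => /idv_inj/(congr1 val) /=; move: n_gt1; lia.
Qed.

Lemma T_const c : T (fun _ => c) = zero.
Proof.
rewrite (T_row (fun _ => c)) /is_id; case: eqfunP => // H.
by move: (H i0) (H i1) => -> /idv_inj.
Qed.

Lemma T_idv_row : T (fun p => idv (row_of p)) = one.
Proof. by rewrite T_row /is_id; case: eqfunP. Qed.

Lemma T_idv_col : T (fun p => idv (col_of p)) = one.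
Proof. by rewrite T_col /is_id; case: eqfunP. Qed.

Lemma T_eq_one x : T x = one ->
  (forall p, x p = idv (row_of p)) \/ (forall p, x p = idv (col_of p)).
Proof. by rewrite T_fnE => /eqP; rewrite ind_eq_one => /orP [] /eqfunP; auto. Qed.

Lemma T_ind x : T x = ind (T x == one).
Proof. by rewrite T_fnE; case: (_ || _). Qed.

Lemma T_commuting_binop_one_one (psi : A -> A -> A) :
  (forall y y', psi (T y) (T y') = T (fun p => psi (y p) (y' p))) ->
  psi one one = ind ((psi one zero == one) || (psi zero one == one)).
Proof.
move=> psiT.
have psi10 : psi one zero = ind (is_id (fun i => psi (idv i) one)).
  have := psiT (fun p => idv (row_of p)) (fun _ => one).
  by rewrite T_idv_row T_const => ->; apply: T_row.
have psi01 : psi zero one = ind (is_id (fun j => psi one (idv j))).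
  have := psiT (fun _ => one) (fun p => idv (col_of p)).
  by rewrite T_idv_col T_const => ->; apply: T_col.
rewrite psi10 psi01 !ind_eq_one /is_id.
case: eqfunP => [H10 | N10] /=; first by have := H10 i0; rewrite idv_i0.
case: eqfunP => [H01 | N01] /=; first by have := H01 i0; rewrite idv_i0.
rewrite -{1}T_idv_row -T_idv_col psiT T_fnE -/(ind false); congr ind.
apply/negbTE/norP; split; apply/negP => /eqfunP H.
- by apply: N10 => i; have := H (pos i i0); rewrite row_of_pos col_of_pos idv_i0.
- by apply: N01 => j; have := H (pos i0 j); rewrite row_of_pos col_of_pos idv_i0.
Qed.

Lemma T_commuting_ind_orb (g : op A) (a b : 'I_(arity g) -> bool) :
  commutes g (T_op hk) -> (forall r, a r -> ~~ b r) ->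
  fn g (fun r => ind (a r || b r)) =
  ind ((fn g (fun r => ind (a r)) == one) || (fn g (fun r => ind (b r)) == one)).
Proof.
move=> gT ab.
pose psi c d := fn g (fun r => if a r then c else if b r then d else zero).
have psiT y y' : psi (T y) (T y') = T (fun p => psi (y p) (y' p)).
  apply: (eq_trans _ (gT (fun r p => if a r then y p else if b r then y' p else zero))).
  congr (fn g _); apply: functional_extensionality => r.
  by case: (a r); case: (b r); rewrite //= T_const.
have psiE c d (v : 'I_(arity g) -> A) :
    (forall r, v r = if a r then c else if b r then d else zero) -> fn g v = psi c d.
  by move=> vE; congr (fn g _); apply: functional_extensionality.
rewrite (psiE one one) => [|r]; last by case: (a r).
rewrite (psiE one zero) => [|r]; last by case: (a r); case: (b r).
rewrite (psiE zero one) => [|r]; last by have := ab r; case: (a r) => // /(_ isT)/negbTE ->.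
exact: T_commuting_binop_one_one.
Qed.

Lemma f_commutes_with_centraliser (g : op A) :
  commutes g (T_op hk) -> commutes (f_op hk) g.
Proof.
move=> gT x /=.
pose a r := is_id (fun i => x i r).
pose b r := is_rev (fun i => x i r).
have gT' X : fn g (fun r => T (X r)) = T (fun p => fn g (fun r => X r p)) := gT X.
have g_id : ind (is_id (fun i => fn g (x i))) = fn g (fun r => ind (a r)).
  by rewrite -T_row -(gT' (fun r p => x (row_of p) r)); congr (fn g _);
    apply: functional_extensionality => r; rewrite -T_row.
have g_rev : ind (is_rev (fun i => fn g (x i))) = fn g (fun r => ind (b r)).
  rewrite -is_id_rev -T_col -(gT' (fun r p => x (rev_ord (col_of p)) r)).
  by congr (fn g _); apply: functional_extensionality => r; rewrite /b -is_id_rev -T_col.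
have -> : (fun r => f (fun i => x i r)) = fun r => ind (a r || b r).
  by apply: functional_extensionality => r; rewrite f_fnE.
rewrite f_fnE T_commuting_ind_orb // => [|r]; last exact: is_id_rev_disj.
by rewrite -g_id -g_rev !ind_eq_one.
Qed.

Definition sum_rel (a b : A) : Prop := (val a + val b == n.+1) || (val a + val b <= 1).

Lemma not_sum_rel_one_one : ~ sum_rel one one.
Proof. by rewrite /sum_rel /=; move: n_gt1; lia. Qed.

Lemma T_eq_one_corner x : T x = one -> x (pos i0 i0) = one.
Proof. by case/T_eq_one => ->; rewrite ?row_of_pos ?col_of_pos idv_i0. Qed.

Lemma T_preserves_sum_rel : preserves sum_rel T.
Proof.
move=> x y xy; rewrite (T_ind x) (T_ind y).
case: eqP => [/T_eq_one_corner x00 | _]; case: eqP => [/T_eq_one_corner y00 | _];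
  rewrite /sum_rel //= ?orbT //.
by have := xy (pos i0 i0); rewrite x00 y00 => /not_sum_rel_one_one.
Qed.

Lemma sum_rel_idv_revv i : sum_rel (idv i) (revv i).
Proof. rewrite /sum_rel val_idv val_revv; have := ltn_ord i; lia. Qed.

Lemma f_idv : f idv = one.
Proof. by rewrite f_fnE /is_id; case: eqfunP. Qed.

Lemma f_revv : f revv = one.
Proof. by rewrite f_fnE /is_rev orbC; case: eqfunP. Qed.

Lemma f_notin_clone : ~ in_clone (fun h => h = T_op hk) (f_op hk).
Proof.
have T_pres h : h = T_op hk -> preserves sum_rel (fn h).
  by move=> ->; exact: T_preserves_sum_rel.
move/(in_clone_preserves T_pres)/(_ idv revv sum_rel_idv_revv).
by rewrite /= f_idv f_revv; apply: not_sum_rel_one_one.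
Qed.

End Corollary.

Theorem corollary3p14 (k : nat) (hk : 2 < k) :
  in_bicentraliser (fun h => h = T_op hk) (f_op hk) /\
  ~ in_clone (fun h => h = T_op hk) (f_op hk).
Proof.
case: k hk => [//|n] hk; split; last exact: f_notin_clone.
split=> [|g [_ gT]]; first exact: n_gt0.
exact: f_commutes_with_centraliser (gT _ erefl).
Qed.
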